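(* Let $\alpha\ge1$ and $\beta\ge1$. If $N\subseteq C$, then every outcome satisfying $\alpha$-proportional fairness also satisfies $(1+\alpha)$-individual fairness, and every outcome satisfying $\beta$-individual fairness also satisfies $2\beta$-proportional fairness. If $N=C$, then every outcome satisfying $\beta$-individual fairness also satisfies $(1+\beta)$-proportional fairness.
   Context: Let $(\mathcal X,d)$ be a metric space, $N=[n]$ a set of agents and $C$ a set of candidates located in $\mathcal X$, $k\in\mathbb N^+$; an outcome is $W\subseteq C$ with $|W|\le k$; $B(i,r)=\{x\in\mathcal X:d(i,x)\le r\}$; $d(i,W)=\min_{c\in W}d(i,c)$. $\alpha$-proportional fairness: there is no group $N'\subseteq N$ with $|N'|\ge n/k$ and candidate $c\in C\setminus W$ such that $\alpha\, d(i,c)<d(i,W)$ for all $i\in N'$. $\beta$-individual fairness (defined for instances with $N\subseteq C$): $d(i,W)\le\beta\, r(i)$ for all $i\in N$, where $r(i)=\min\{r\in\mathbb R: |B(i,r)\cap N|\ge n/k\}$. *)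

From mathcomp Require Import all_boot all_order all_algebra.
From mathcomp Require Import finmap.
Set Implicit Arguments. Unset Strict Implicit. Unset Printing Implicit Defensive.
Import Order.TTheory GRing.Theory Num.Theory.
Local Open Scope ring_scope.
Local Open Scope fset_scope.

Section Fairness.
Variables (R : realFieldType) (X : choiceType) (d : X -> X -> R).

Definition is_metric : Prop :=
  [/\ forall x y, d x y = 0 <-> x = y,
      forall x y, d x y = d y x &
      forall x y z, d x z <= (d x y + d y z)%R].

(* alpha-proportional fairness of outcome W, for agents N, candidates C, parameter k.
   d(i,W) = min_{w in W} d i w, so  a*d(i,c) < d(i,W)  iff  a*d(i,c) < d i w for all w in W. *)
Definition prop_fair (N C : {fset X}) (k : nat) (alpha : R) (W : {fset X}) : Prop :=
  ~ exists (N' : {fset X}) (c : X),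
      [/\ N' `<=` N,
          (#|` N'|%:R >= #|` N|%:R / k%:R :> R),
          c \in C `\` W &
          forall i, i \in N' -> forall w, w \in W -> alpha * d i c < d i w].

Definition ball_count (N : {fset X}) (i : X) (r : R) : nat :=
  #|` [fset j in N | d i j <= r]|.

Definition is_radius (N : {fset X}) (k : nat) (i : X) (r : R) : Prop :=
  (ball_count N i r)%:R >= #|` N|%:R / k%:R :> R /\
  forall r', (ball_count N i r')%:R >= #|` N|%:R / k%:R :> R -> r <= r'.

Definition indiv_fair (N : {fset X}) (k : nat) (beta : R) (W : {fset X}) : Prop :=
  forall i, i \in N -> forall r, is_radius N k i r ->
    exists2 w, w \in W & d i w <= beta * r.

Definition outcome (C : {fset X}) (k : nat) (W : {fset X}) : Prop :=
  W `<=` C /\ (#|` W| <= k)%N.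

End Fairness.

(* Both implications compare a blocking coalition with the ball defining r(i).
   If W is alpha-proportionally fair, the ball of radius r(i) around an agent i
   is large enough to be a coalition and i itself is a candidate (if i is in W
   there is nothing to prove), so some member of the ball does not prefer i by
   the factor alpha; the triangle inequality then puts W within
   (1 + alpha) r(i) of i.  Conversely, if a coalition N' prefers a candidate c,
   take the member i of N' farthest from c: all of N' lies within 2 d(i,c) of
   i, so r(i) <= 2 d(i,c) and beta-individual fairness makes
   d(i,W) <= 2 beta d(i,c).  When N = C, c is itself an agent, all of N' lies
   within d(c,i) of c, so r(c) <= d(c,i), and routing from i through c bounds
   d(i,W) by (1 + beta) d(i,c). *)
From mathcomp Require Import all_boot all_order all_algebra.
From mathcomp Require Import finmap.
From mathcomp Require Import lra.
Import Order.TTheory GRing.Theory Num.Theory.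
Set Implicit Arguments. Unset Strict Implicit.
Local Open Scope fset_scope.
Local Open Scope ring_scope.

Lemma fset_argmax (disp : Order.disp_t) (T : orderType disp) (X : choiceType)
    (F : X -> T) (A : {fset X}) :
  A != fset0 -> exists2 x, x \in A & forall y, y \in A -> (F y <= F x)%O.
Proof.
case/fset0Pn=> x0 x0A.
case: (@arg_maxP _ _ A [` x0A] xpredT (F \o val)) => // -[x xA] _ /= Fmax.
by exists x => // y yA; exact: (Fmax [` yA]).
Qed.

Lemma fset_argmin (disp : Order.disp_t) (T : orderType disp) (X : choiceType)
    (F : X -> T) (A : {fset X}) :
  A != fset0 -> exists2 x, x \in A & forall y, y \in A -> (F x <= F y)%O.
Proof.
case/fset0Pn=> x0 x0A.
case: (@arg_minP _ _ A [` x0A] xpredT (F \o val)) => // -[x xA] _ /= Fmin.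
by exists x => // y yA; exact: (Fmin [` yA]).
Qed.

Section MetricFairness.
Variables (R : realFieldType) (X : choiceType) (d : X -> X -> R).
Hypothesis d_metric : is_metric d.

Lemma metricxx x : d x x = 0.
Proof. by case: d_metric => d0 _ _; apply/d0. Qed.

Lemma metricC x y : d x y = d y x.
Proof. by case: d_metric. Qed.

Lemma metric_triangle x y z : d x z <= d x y + d y z.
Proof. by case: d_metric. Qed.

Lemma metric_ge0 x y : 0 <= d x y.
Proof. by have := metric_triangle x y x; rewrite metricxx (metricC y x); lra. Qed.

Section Radius.
Variables (N : {fset X}) (k : nat).

Local Notation quota := (#|` N|%:R / k%:R : R).

Lemma ball_count_ge_card (A : {fset X}) i r :
  A `<=` N -> (forall j, j \in A -> d i j <= r) -> (#|` A| <= ball_count d N i r)%N.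
Proof.
move=> AN A_near; apply: fsubset_leq_card; apply/fsubsetP => j jA.
by rewrite !inE (fsubsetP AN _ jA) A_near.
Qed.

Lemma quota_gt0 : N != fset0 -> (0 < k)%N -> 0 < quota.
Proof. by move=> N0 k0; rewrite divr_gt0 // ltr0n // cardfs_gt0. Qed.

Lemma quota_le_card : (0 < k)%N -> quota <= #|` N|%:R.
Proof. by move=> k0; rewrite ler_pdivrMr ?ltr0n // ler_peMr // ler1n. Qed.

Lemma quota_reached_neq0 (A : {fset X}) :
  0 < quota -> quota <= #|` A|%:R -> A != fset0.
Proof. by move=> q0 qA; rewrite -cardfs_gt0 -(ltr0n R) (lt_le_trans q0 qA). Qed.

(* A radius exists only if the quota is positive: otherwise every r' qualifies,
   and r <= r - 1 would follow. *)
Lemma radius_quota_gt0 i r : is_radius d N k i r -> 0 < quota.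
Proof.
case=> _ r_min; rewrite ltNge; apply/negP => q_le0.
have := r_min (r - 1) (le_trans q_le0 (ler0n _ _)); lra.
Qed.

Lemma radius_ge0 i r : is_radius d N k i r -> 0 <= r.
Proof.
move=> rad; have [ball_quota _] := rad.
have /fset0Pn[j] := quota_reached_neq0 (radius_quota_gt0 rad) ball_quota.
by rewrite !inE => /andP[_]; apply: le_trans (metric_ge0 i j).
Qed.

Lemma radius_le (A : {fset X}) i r s :
    is_radius d N k i r -> A `<=` N -> quota <= #|` A|%:R ->
  (forall j, j \in A -> d i j <= s) -> r <= s.
Proof.
move=> [_ r_min] AN A_quota A_near; apply: r_min; apply: (le_trans A_quota).
by rewrite ler_nat ball_count_ge_card.
Qed.

(* The radius is the least distance d i j whose closed ball meets the quota. *)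
Lemma radius_exists i : N != fset0 -> (0 < k)%N -> exists r, is_radius d N k i r.
Proof.
move=> N0 k0; pose S := [fset j in N | quota <= (ball_count d N i (d i j))%:R].
have S0 : S != fset0.
  have [j jN j_far] := fset_argmax (d i) N0.
  apply/fset0Pn; exists j; rewrite !inE jN /=.
  by rewrite (le_trans (quota_le_card k0)) // ler_nat ball_count_ge_card.
have [j /[!inE] /andP[jN j_quota] j_min] := fset_argmin (d i) S0.
exists (d i j); split => // r' r'_quota.
have ball0 := quota_reached_neq0 (quota_gt0 N0 k0) r'_quota.
have [j' /[!inE] /andP[j'N j'r'] j'_far] := fset_argmax (d i) ball0.
apply: le_trans (j_min j' _) j'r'; rewrite !inE j'N /=.
apply: (le_trans r'_quota); rewrite ler_nat ball_count_ge_card //.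
by apply/fsubsetP => x /[!inE] /andP[].
Qed.

End Radius.

Lemma prop_fair_indiv_fair (N C W : {fset X}) k alpha :
    N `<=` C -> 0 <= alpha -> prop_fair d N C k alpha W ->
  indiv_fair d N k (1 + alpha) W.
Proof.
move=> NC alpha_ge0 fairW i iN r rad.
have r_ge0 := radius_ge0 rad.
have [/hasP[w wW near_w] | /hasPn far] := boolP (has (fun w => d i w <= (1 + alpha) * r) W).
  by exists w.
have {}far w : w \in W -> (1 + alpha) * r < d i w by move/far; rewrite ltNge.
case: fairW; exists [fset j in N | d i j <= r], i; split.
- by apply/fsubsetP => j /[!inE] /andP[].
- by case: rad.
- rewrite in_fsetD (fsubsetP NC _ iN) andbT; apply/negP => /far.
  by rewrite metricxx; nra.
- move=> j /[!inE] /andP[_ dij] w /far far_w.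
  have := metric_triangle i j w; rewrite (metricC j i).
  have : alpha * d i j <= alpha * r by rewrite ler_wpM2l.
  lra.
Qed.

Lemma indiv_fair_prop_fair (N C W : {fset X}) k beta :
    N != fset0 -> (0 < k)%N -> 0 <= beta -> indiv_fair d N k beta W ->
  prop_fair d N C k (2 * beta) W.
Proof.
move=> N0 k0 beta_ge0 fairW [N' [c [N'N N'_quota _ blocks]]].
have N'0 := quota_reached_neq0 (quota_gt0 N0 k0) N'_quota.
have [i iN' i_far] := fset_argmax (d^~ c) N'0.
have [r rad] := radius_exists i N0 k0.
have r_le : r <= 2 * d i c.
  apply: radius_le rad N'N N'_quota _ => j /i_far dj.
  by have := metric_triangle i c j; rewrite (metricC c j); lra.
have [w wW near_w] := fairW i (fsubsetP N'N _ iN') r rad.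
have := blocks i iN' w wW.
have : beta * r <= beta * (2 * d i c) by rewrite ler_wpM2l.
lra.
Qed.

Lemma indiv_fair_prop_fair_self (N W : {fset X}) k beta :
    N != fset0 -> (0 < k)%N -> 0 <= beta -> indiv_fair d N k beta W ->
  prop_fair d N N k (1 + beta) W.
Proof.
move=> N0 k0 beta_ge0 fairW [N' [c [N'N N'_quota /[!inE] /andP[_ cN] blocks]]].
have N'0 := quota_reached_neq0 (quota_gt0 N0 k0) N'_quota.
have [i iN' i_far] := fset_argmax (d c) N'0.
have [r rad] := radius_exists c N0 k0.
have r_le : r <= d c i := radius_le rad N'N N'_quota i_far.
have [w wW near_w] := fairW c cN r rad.
have := blocks i iN' w wW.
have := metric_triangle i c w; rewrite (metricC i c).
have : beta * r <= beta * d c i by rewrite ler_wpM2l.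
lra.
Qed.

End MetricFairness.

Theorem theorem1 (R : realFieldType) (X : choiceType) (d : X -> X -> R)
  (N C : {fset X}) (k : nat) (alpha beta : R) :
  is_metric d -> N != fset0 -> (0 < k)%N -> 1 <= alpha -> 1 <= beta ->
  (N `<=` C ->
     (forall W, outcome C k W -> prop_fair d N C k alpha W ->
                indiv_fair d N k (1 + alpha)%R W) /\
     (forall W, outcome C k W -> indiv_fair d N k beta W ->
                prop_fair d N C k (2 * beta) W)) /\
  (N = C ->
     forall W, outcome C k W -> indiv_fair d N k beta W ->
               prop_fair d N C k (1 + beta)%R W).
Proof.
move=> d_metric N0 k0 alpha_ge1 beta_ge1.
have alpha_ge0 : 0 <= alpha by lra.
have beta_ge0 : 0 <= beta by lra.
split; first split=> W _.
- exact: prop_fair_indiv_fair.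
- exact: indiv_fair_prop_fair.
- by move=> <- W _; exact: indiv_fair_prop_fair_self.
Qed.
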